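(* Let $d\ge2$ and $\alpha>0$. The map $F_\alpha:\mathbf{Sym}_d^+\to\mathbb{R}^+$, $F_\alpha(A)=(\det A)^\alpha$, is $\Lambda$-concave if and only if $\alpha\le\frac1{d-1}$.
   Context: $\mathbf{Sym}_d^+$ is the cone of real symmetric positive semi-definite $d\times d$ matrices. A function $F:\mathbf{Sym}_d^+\to\mathbb{R}$ is called $\Lambda$-concave if for all $B,C\in\mathbf{Sym}_d^+$ with $\det(C-B)=0$, the restriction of $F$ to the segment $[B,C]$ is concave, i.e. $t\mapsto F((1-t)B+tC)$ is concave on $[0,1]$. *)

From mathcomp Require Import all_boot all_order all_algebra.
From mathcomp Require Import all_classical all_reals all_analysis.
Set Implicit Arguments. Unset Strict Implicit. Unset Printing Implicit Defensive.
Import Order.TTheory GRing.Theory Num.Theory.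
Local Open Scope ring_scope.

Definition psd (R : realType) (d : nat) (A : 'M[R]_d) : Prop :=
  A^T = A /\ forall v : 'cV[R]_d, 0 <= (v^T *m A *m v) 0 0.

Definition concave_on01 (R : realType) (g : R -> R) : Prop :=
  forall s t l : R, 0 <= s <= 1 -> 0 <= t <= 1 -> 0 <= l <= 1 ->
    (1 - l) * g s + l * g t <= g ((1 - l) * s + l * t).

(* Lambda-concavity of F : Sym_d^+ -> R (F given on all matrices, only its
   values on Sym_d^+ matter since segments between PSD matrices stay PSD). *)
Definition Lambda_concave (R : realType) (d : nat) (F : 'M[R]_d -> R) : Prop :=
  forall B C : 'M[R]_d, psd B -> psd C -> \det (C - B) = 0 ->
    concave_on01 (fun t => F ((1 - t) *: B + t *: C)).

Definition F_alpha (R : realType) (d : nat) (alpha : R) (A : 'M[R]_d) : R :=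
  powR (\det A) alpha.

From mathcomp Require Import all_boot all_order all_algebra.
From mathcomp Require Import all_classical all_reals all_analysis.
From mathcomp Require Import complex polyrcf perm.
From mathcomp Require Import ring lra.
Import Order.TTheory GRing.Theory Num.Theory.
Local Open Scope ring_scope.
Set Implicit Arguments. Unset Strict Implicit. Unset Printing Implicit Defensive.

(* For PSD matrices B and C with det (C - B) = 0, p t := det ((1 - t) B + t C)
   is a polynomial of degree at most d - 1.  Unless p vanishes on [0, 1], some
   point A of the segment is positive definite, and det (A + w (C - B)) <> 0 for
   non-real w, so p has only real roots; none lies in (0, 1), because a kernel
   vector of a singular interior point is a common kernel vector of B and C.
   Hence on [0, 1], p is a positive constant times a product of at most d - 1
   nonnegative affine functions, and the concavity of p ^ alpha for
   (d - 1) alpha <= 1 is a Hoelder-type inequality, obtained by normalizing and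
   applying the weighted AM-GM inequality.  Conversely, on the segment from
   diag (1, 0, ..., 0) to the identity p t = t ^ (d - 1), and midpoint concavity
   of t ^ ((d - 1) alpha) between 0 and 1 forces (d - 1) alpha <= 1. *)

Section PowRInequalities.
Variable R : realType.
Implicit Types (a l x y : R).

Lemma young_powR x y a : 0 <= x -> 0 <= y -> 0 <= a <= 1 ->
  x `^ a * y `^ (1 - a) <= a * x + (1 - a) * y.
Proof.
move=> x0 y0 /andP[a0 a1].
have [->|a_neq0] := eqVneq a 0; first by rewrite powRr0 subr0 powRr1 //; lra.
have [->|a_neq1] := eqVneq a 1; first by rewrite powRr1 // subrr powRr0; lra.
have a_gt0 : 0 < a by rewrite lt_def a_neq0 a0.
have a'_gt0 : 0 < 1 - a by rewrite subr_gt0 lt_def eq_sym a_neq1 a1.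
have := @conjugate_powR R (x `^ a) (y `^ (1 - a)) a^-1 (1 - a)^-1
  (powR_ge0 _ _) (powR_ge0 _ _).
rewrite !invr_gt0 a_gt0 a'_gt0 => /(_ isT isT).
rewrite !invrK addrC subrK => /(_ erefl).
by rewrite -!powRrM !mulfV ?gt_eqF // !powRr1 // (mulrC x) (mulrC y).
Qed.

Lemma powR_prod (I : Type) (r : seq I) (F : I -> R) a :
  (forall i, 0 <= F i) -> (\prod_(i <- r) F i) `^ a = \prod_(i <- r) F i `^ a.
Proof.
move=> F_ge0; elim: r => [|i r IHr]; first by rewrite !big_nil powR1.
by rewrite !big_cons powRM ?IHr // prodr_ge0.
Qed.

(* Weighted AM-GM for the values F i (weight a each) and 1 (weight 1 - k a). *)
Lemma AMGM_prod_powR (I : Type) (r : seq I) (F : I -> R) a :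
  (forall i, 0 <= F i) -> 0 <= a -> (size r)%:R * a <= 1 ->
  \prod_(i <- r) F i `^ a <= a * \sum_(i <- r) F i + (1 - (size r)%:R * a).
Proof.
move=> F_ge0; elim: r a => [|i r IHr] a a0 ra.
  by rewrite !big_nil mul0r subr0 mulr0 add0r.
rewrite big_cons big_cons /= -natr1 mulrDl mul1r in ra *.
have ra0 : 0 <= (size r)%:R * a by rewrite mulr_ge0.
have [a1|a_neq1] := eqVneq a 1.
  have -> : r = [::].
    by apply/size0nil/eqP; rewrite -(eqr_nat R); rewrite a1 mulr1 in ra ra0; lra.
  by rewrite a1 !big_nil powRr1 // mulr1 addr0 /=; lra.
have a'_gt0 : 0 < 1 - a by rewrite subr_gt0 lt_neqAle a_neq1 /=; lra.
pose b := a / (1 - a).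
have b0 : 0 <= b by rewrite divr_ge0 // ltW.
have rb : (size r)%:R * b <= 1 by rewrite mulrA ler_pdivrMr // mul1r; lra.
set Q := \prod_(j <- r) F j `^ b.
have Q0 : 0 <= Q by rewrite prodr_ge0 // => j _; rewrite powR_ge0.
have -> : \prod_(j <- r) F j `^ a = Q `^ (1 - a).
  rewrite powR_prod => [|j]; last exact: powR_ge0.
  by apply: eq_bigr => j _; rewrite -powRrM divfK ?gt_eqF.
have a01 : 0 <= a <= 1 by rewrite a0 /=; lra.
apply: le_trans (young_powR (F_ge0 i) Q0 a01) _.
have := ler_wpM2l (ltW a'_gt0) (IHr b b0 rb); rewrite -/Q.
have -> : (1 - a) * (b * \sum_(j <- r) F j + (1 - (size r)%:R * b))
   = a * \sum_(j <- r) F j + (1 - a) - (size r)%:R * a.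
  by rewrite /b; field; rewrite gt_eqF.
lra.
Qed.

Lemma concave_prod_powR (I : eqType) (r : seq I) (f g : I -> R) a l :
  (forall i, 0 <= f i) -> (forall i, 0 <= g i) -> 0 < a ->
  (size r)%:R * a <= 1 -> 0 <= l <= 1 ->
  (1 - l) * \prod_(i <- r) f i `^ a + l * \prod_(i <- r) g i `^ a
  <= \prod_(i <- r) ((1 - l) * f i + l * g i) `^ a.
Proof.
move=> f0 g0 a0 ra /andP[l0 l1].
have [->|l_neq0] := eqVneq l 0.
  by rewrite subr0 !mul1r mul0r addr0; under [leRHS]eq_bigr do rewrite mul1r mul0r addr0.
have [->|l_neq1] := eqVneq l 1.
  by rewrite subrr !mul1r mul0r add0r; under [leRHS]eq_bigr do rewrite mul0r add0r mul1r.
have l_gt0 : 0 < l by rewrite lt_def l_neq0 l0.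
have l'_gt0 : 0 < 1 - l by rewrite subr_gt0 lt_def eq_sym l_neq1 l1.
pose w i := (1 - l) * f i + l * g i.
have w0 i : 0 <= w i by rewrite addr_ge0 // mulr_ge0 // ltW.
have prod0 (h : I -> R) i : i \in r -> h i = 0 -> \prod_(j <- r) h j `^ a = 0.
  move=> ir hi; apply/eqP; rewrite prodf_seq_eq0; apply/hasP; exists i => //.
  by rewrite /= hi powR0 // gt_eqF.
have [/hasP[i ir /eqP wi]|/hasPn w_neq0] := boolP (has (fun i => w i == 0) r).
  have [fi gi] : f i = 0 /\ g i = 0.
    by have := f0 i; have := g0 i; move: wi; rewrite /w; nra.
  rewrite (prod0 f i) // (prod0 g i) // !mulr0 addr0.
  by rewrite prodr_ge0 // => j _; rewrite powR_ge0.
have w_gt0 i : i \in r -> 0 < w i by move=> ir; rewrite lt_def w0 andbT; exact: w_neq0.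
have uv1 i : i \in r -> (1 - l) * (f i / w i) + l * (g i / w i) = 1.
  by move=> ir; rewrite !mulrA -mulrDl divff // gt_eqF // w_gt0.
have normalize (h : I -> R) : (forall i, 0 <= h i) -> \prod_(i <- r) h i `^ a
    = \prod_(i <- r) (h i / w i) `^ a * \prod_(i <- r) w i `^ a.
  move=> h0; rewrite -big_split /=; apply: eq_big_seq => i ir.
  by rewrite -powRM ?divfK ?gt_eqF ?w_gt0 // divr_ge0.
rewrite (normalize f f0) (normalize g g0) !mulrA -mulrDl -[leRHS]mul1r.
apply: ler_wpM2r; first by rewrite prodr_ge0 // => i _; rewrite powR_ge0.
have u0 i : 0 <= f i / w i by rewrite divr_ge0.
have v0 i : 0 <= g i / w i by rewrite divr_ge0.
have := ler_wpM2l (ltW l'_gt0) (AMGM_prod_powR u0 (ltW a0) ra).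
have := ler_wpM2l l0 (AMGM_prod_powR v0 (ltW a0) ra).
set Su := \sum_(i <- r) (f i / w i); set Sv := \sum_(i <- r) (g i / w i).
set c := 1 - _.
have : (1 - l) * Su + l * Sv = (size r)%:R.
  by rewrite !mulr_sumr -big_split -sum1_size natr_sum; apply: eq_big_seq => i /uv1.
have : (1 - l) * (a * Su + c) + l * (a * Sv + c) = a * ((1 - l) * Su + l * Sv) + c.
  by ring.
rewrite /c => E H; rewrite H in E; lra.
Qed.

End PowRInequalities.

Section RealRootedConcavity.
Variable R : realType.

Lemma conv_in01 (s t l : R) : 0 <= s <= 1 -> 0 <= t <= 1 -> 0 <= l <= 1 ->
  0 <= (1 - l) * s + l * t <= 1.
Proof. by move=> /andP[? ?] /andP[? ?] /andP[? ?]; apply/andP; split; nra. Qed.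

Lemma concave_on01_powR_split (p : {poly R}) (rs : seq R) (a t0 : R) :
  p = lead_coef p *: \prod_(r <- rs) ('X - r%:P) ->
  (forall t, 0 < t < 1 -> p.[t] != 0) ->
  0 <= t0 <= 1 -> 0 < p.[t0] -> 0 < a -> (size rs)%:R * a <= 1 ->
  concave_on01 (fun t => p.[t] `^ a).
Proof.
move=> pE p_neq0 t0_01 p_t0 a_gt0 rs_a.
have outside r : r \in rs -> (r <= 0) || (1 <= r).
  move=> r_rs; rewrite leNgt [1 <= r]leNgt -negb_and; apply/negP => /p_neq0.
  have /rootP : root (\prod_(x <- rs) ('X - x%:P)) r by rewrite root_prod_XsubC.
  by rewrite pE hornerZ => ->; rewrite mulr0 eqxx.
(* No root lies in (0, 1), so on [0, 1] each factor t - r has the constant sign sg r. *)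
pose sg (r : R) : R := if r <= 0 then 1 else -1.
have sg_abs r t : r \in rs -> 0 <= t <= 1 -> t - r = sg r * `|t - r|.
  move=> /outside; rewrite /sg => /orP[r0 | r1] /andP[t_ge0 t_le1].
    by rewrite r0 mul1r ger0_norm; lra.
  by rewrite ifF ?ler0_norm; lra.
have abs_affine r s t l : r \in rs -> 0 <= s <= 1 -> 0 <= t <= 1 -> 0 <= l <= 1 ->
    `|(1 - l) * s + l * t - r| = (1 - l) * `|s - r| + l * `|t - r|.
  move=> /outside /orP[r0 | r1] /andP[? ?] /andP[? ?] /andP[? ?].
    by rewrite !ger0_norm; nra.
  by rewrite !ler0_norm; nra.
pose c := lead_coef p * \prod_(r <- rs) sg r.
have p_abs t : 0 <= t <= 1 -> p.[t] = c * \prod_(r <- rs) `|t - r|.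
  move=> t01; rewrite {1}pE hornerZ horner_prod -mulrA -big_split /=.
  by congr (_ * _); apply: eq_big_seq => r r_rs; rewrite hornerXsubC; apply: sg_abs.
have c_gt0 : 0 < c.
  move: p_t0; rewrite p_abs //.
  have : 0 <= \prod_(r <- rs) `|t0 - r| by rewrite prodr_ge0.
  nra.
move=> s t l s01 t01 l01 /=.
clearbody c; rewrite !p_abs ?conv_in01 // !powRM ?(ltW c_gt0) ?prodr_ge0 //.
rewrite !powR_prod => [|r|r|r]; try exact: normr_ge0.
rewrite mulrCA [l * (_ * _)]mulrCA -mulrDr ler_wpM2l ?powR_ge0 //.
under [leRHS]eq_big_seq => r r_rs do rewrite abs_affine //.
exact: concave_prod_powR.
Qed.

End RealRootedConcavity.

Section RealRooted.
Variable R : realType.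
Local Notation toC := (real_complex R).

Lemma real_rooted_split (p : {poly R}) :
  (forall z, root (map_poly toC p) z -> complex.Im z = 0) ->
  exists2 rs : seq R, p = lead_coef p *: \prod_(r <- rs) ('X - r%:P)
                    & (size rs).+1 = size p.
Proof.
move=> real_roots; have [zs pE] := closed_field_poly_normal (map_poly toC p).
have p_neq0 : p != 0.
  apply/eqP => p0; have := real_roots 'i%C; rewrite p0 map_poly0 root0.
  by move=> /(_ isT) /eqP; rewrite oner_eq0.
have lc_neq0 : lead_coef (map_poly toC p) != 0.
  by rewrite lead_coef_map fmorph_eq0 lead_coef_eq0.
have zs_real z : z \in zs -> (complex.Re z)%:C%C = z.
  move=> z_zs; have := real_roots z; rewrite pE rootZ // root_prod_XsubC.
  by case: z z_zs => x y /= z_zs /(_ z_zs) ->.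
exists (map (@complex.Re R) zs).
  apply: (@map_poly_inj _ _ toC); rewrite {1}pE map_polyZ lead_coef_map /=.
  rewrite rmorph_prod big_map; congr (_ *: _); apply: eq_big_seq => z z_zs.
  by rewrite rmorphB /= map_polyX map_polyC /= zs_real.
apply: (@eq_trans _ _ (size (map_poly toC p))); last by rewrite size_map_poly.
by rewrite pE size_scale // size_prod_XsubC size_map.
Qed.

End RealRooted.

Lemma det_eq0P (R : idomainType) (n : nat) (M : 'M[R]_n) :
  reflect (exists2 x : 'cV_n, x != 0 & M *m x = 0) (\det M == 0).
Proof.
rewrite -det_tr; apply: (iffP det0P) => -[v v_neq0 vM].
  by exists v^T; rewrite ?trmx_eq0 // -[M]trmxK -trmx_mul vM trmx0.
by exists v^T; rewrite ?trmx_eq0 // -trmx_mul vM trmx0.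
Qed.

Section PencilPoly.
Variable R : comNzRingType.

Lemma size_prod_linear_leq (I : Type) (r : seq I) (b e : I -> R) :
  (size (\prod_(i <- r) ((b i)%:P + 'X * (e i)%:P))%R <= (size r).+1)%N.
Proof.
elim: r => [|i r IHr]; first by rewrite big_nil size_poly1.
have factor_size : (size ((b i)%:P + 'X * (e i)%:P)%R <= 2)%N.
  rewrite (leq_trans (size_polyD _ _)) // geq_max (leq_trans (size_polyC_leq1 _)) //=.
  rewrite (leq_trans (size_polyMleq _ _)) // size_polyX.
  by rewrite -subn1 leq_subLR add1n (leq_trans (leq_add (leqnn 2) (size_polyC_leq1 _))).
rewrite big_cons (leq_trans (size_polyMleq _ _)) //=.
by rewrite -subn1 leq_subLR (leq_trans (leq_add factor_size IHr)).
Qed.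

Lemma coef_prod_linear_size (I : Type) (r : seq I) (b e : I -> R) :
  (\prod_(i <- r) ((b i)%:P + 'X * (e i)%:P))`_(size r) = \prod_(i <- r) e i.
Proof.
elim: r => [|i r IHr]; first by rewrite !big_nil coef1.
rewrite !big_cons mulrDl coefD coefCM -mulrA coefXM coefCM /= IHr.
by rewrite nth_default ?size_prod_linear_leq // mulr0 add0r.
Qed.

Variable n : nat.
Implicit Types (B D : 'M[R]_n).

Definition pencil_poly B D : {poly R} :=
  \det (map_mx polyC B + 'X *: map_mx polyC D).

Lemma horner_pencil_poly B D t : (pencil_poly B D).[t] = \det (B + t *: D).
Proof.
rewrite -horner_evalE /pencil_poly -det_map_mx; congr (\det _); apply/matrixP => i j.
by rewrite !mxE /= horner_evalE hornerD hornerM hornerX !hornerC.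
Qed.

Let size_index_enum : size (index_enum 'I_n) = n.
Proof. by rewrite [index_enum _]unlock -enumT size_enum_ord. Qed.

Lemma pencil_polyE B D : pencil_poly B D =
  \sum_(s : 'S_n) (-1) ^+ s *:
    \prod_(i <- index_enum 'I_n) ((B i (s i))%:P + 'X * (D i (s i))%:P).
Proof.
rewrite /pencil_poly /determinant; apply: eq_bigr => s _.
by rewrite -mul_polyC rmorph_sign; congr (_ * _); apply: eq_bigr => i _; rewrite !mxE.
Qed.

Lemma size_pencil_poly B D : (size (pencil_poly B D) <= n.+1)%N.
Proof.
rewrite pencil_polyE (leq_trans (size_sum _ _ _)) //; apply/bigmax_leqP => s _.
rewrite (leq_trans (size_scale_leq _ _)) //.
by rewrite (leq_trans (size_prod_linear_leq _ _ _)) ?size_index_enum.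
Qed.

Lemma coef_pencil_poly B D : (pencil_poly B D)`_n = \det D.
Proof.
rewrite pencil_polyE coef_sum; apply: eq_bigr => s _.
have := coef_prod_linear_size (index_enum 'I_n) (fun i => B i (s i)) (fun i => D i (s i)).
by rewrite size_index_enum coefZ => ->.
Qed.

Lemma size_pencil_poly_singular B D : \det D = 0 -> (size (pencil_poly B D) <= n)%N.
Proof.
move=> detD0; apply/leq_sizeP => j; rewrite leq_eqVlt => /orP[/eqP <- | ltnj].
  by rewrite coef_pencil_poly.
by rewrite nth_default // (leq_trans (size_pencil_poly B D)).
Qed.

End PencilPoly.

Lemma pencil_poly_map (R S : comNzRingType) (f : {rmorphism R -> S}) n
    (B D : 'M[R]_n) :
  map_poly f (pencil_poly B D) = pencil_poly (map_mx f B) (map_mx f D).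
Proof.
rewrite /pencil_poly -det_map_mx; congr (\det _); apply/matrixP => i j.
by rewrite !mxE rmorphD rmorphM /= map_polyX !map_polyC.
Qed.

Lemma conv_pencil (R : comNzRingType) n (B C : 'M[R]_n) t :
  (1 - t) *: B + t *: C = B + t *: (C - B).
Proof. by rewrite scalerBl scale1r scalerBr addrAC addrA. Qed.

Section SemiDefinite.
Variables (R : realType) (n : nat).
Implicit Types (M B C : 'M[R]_n) (x y : 'cV[R]_n).

Definition mxform M x y : R := (x^T *m M *m y) 0 0.

Definition pd M := M^T = M /\ forall x, x != 0 -> 0 < mxform M x x.

Lemma mxform_sym M x y : M^T = M -> mxform M x y = mxform M y x.
Proof.
move=> M_sym; transitivity ((x^T *m M *m y)^T 0 0); first by rewrite mxE.
by rewrite !trmx_mul trmxK M_sym mulmxA.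
Qed.

Lemma mxformDr M x y z : mxform M x (y + z) = mxform M x y + mxform M x z.
Proof. by rewrite /mxform mulmxDr mxE. Qed.

Lemma mxformZr M x y c : mxform M x (c *: y) = c * mxform M x y.
Proof. by rewrite /mxform -scalemxAr mxE. Qed.

Lemma mxformDl M x y z : mxform M (y + z) x = mxform M y x + mxform M z x.
Proof. by rewrite /mxform linearD /= !mulmxDl mxE. Qed.

Lemma mxformZl M x y c : mxform M (c *: y) x = c * mxform M y x.
Proof. by rewrite /mxform linearZ /= -!scalemxAl mxE. Qed.

Lemma mxform_conv B C x y t :
  mxform ((1 - t) *: B + t *: C) x y = (1 - t) * mxform B x y + t * mxform C x y.
Proof. by rewrite /mxform mulmxDr mulmxDl -!scalemxAr -!scalemxAl !mxE. Qed.

Lemma mxform_shift M x y t : M^T = M ->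
  mxform M (x + t *: y) (x + t *: y)
  = mxform M x x + 2 * t * mxform M y x + t ^+ 2 * mxform M y y.
Proof.
move=> M_sym; rewrite !mxformDl !mxformZl !mxformDr !mxformZr.
by rewrite (mxform_sym x y M_sym); ring.
Qed.

Lemma mxform1_ge0 x : 0 <= mxform 1%:M x x.
Proof.
rewrite /mxform mulmx1 mxE sumr_ge0 // => i _.
by rewrite mxE -expr2 sqr_ge0.
Qed.

Lemma mxform1_eq0 x : mxform 1%:M x x = 0 -> x = 0.
Proof.
rewrite /mxform mulmx1 mxE => /eqP; rewrite psumr_eq0 => [/allP x0|i _]; last first.
  by rewrite mxE -expr2 sqr_ge0.
apply/matrixP => i j; rewrite (ord1 j) !mxE.
by have := x0 i (mem_index_enum _); rewrite mxE -expr2 sqrf_eq0 => /eqP.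
Qed.

Lemma psd_ker M x : psd M -> mxform M x x = 0 -> M *m x = 0.
Proof.
move=> [M_sym M_ge0] x0.
suff Mx_ortho y : mxform M y x = 0.
  apply: mxform1_eq0; have := Mx_ortho (M *m x).
  by rewrite /mxform mulmx1 -mulmxA.
(* t |-> mxform M (x + t y) (x + t y) is a nonnegative quadratic without constant
   term, so its linear coefficient 2 c must vanish. *)
set c := mxform M y x; set m := mxform M y y.
have m_ge0 : 0 <= m := M_ge0 y.
have := M_ge0 (x + (- c / (m + 1)) *: y); rewrite -/(mxform _ _ _).
rewrite mxform_shift // x0 -/c -/m.
have -> : 0 + 2 * (- c / (m + 1)) * c + (- c / (m + 1)) ^+ 2 * m
          = - (c ^+ 2 * (m + 2) / (m + 1) ^+ 2).
  by field; rewrite gt_eqF //; lra.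
rewrite oppr_ge0 ler_pdivrMr ?exprn_gt0 //; last lra.
rewrite mul0r => cm; apply/eqP; rewrite -sqrf_eq0 eq_le sqr_ge0 andbT; nra.
Qed.

Lemma conv_sym B C t : B^T = B -> C^T = C ->
  ((1 - t) *: B + t *: C)^T = (1 - t) *: B + t *: C.
Proof. by move=> B_sym C_sym; rewrite linearD !linearZ /= B_sym C_sym. Qed.

Lemma psd_conv B C t : psd B -> psd C -> 0 <= t <= 1 -> psd ((1 - t) *: B + t *: C).
Proof.
move=> [B_sym B_ge0] [C_sym C_ge0] /andP[t_ge0 t_le1]; split; first exact: conv_sym.
move=> x; have := B_ge0 x; have := C_ge0 x; have := mxform_conv B C x x t.
by rewrite /mxform => ->; nra.
Qed.

Lemma pd_conv B C t : pd B -> pd C -> 0 <= t <= 1 -> pd ((1 - t) *: B + t *: C).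
Proof.
move=> [B_sym B_gt0] [C_sym C_gt0] /andP[t_ge0 t_le1]; split; first exact: conv_sym.
move=> x x_neq0; rewrite mxform_conv.
by have := B_gt0 x x_neq0; have := C_gt0 x x_neq0; nra.
Qed.

Lemma pd1 : pd 1%:M.
Proof.
split=> [|x x_neq0]; first exact: trmx1.
by rewrite lt_def mxform1_ge0 andbT; apply: contra x_neq0 => /eqP /mxform1_eq0 ->.
Qed.

Lemma pd_det_neq0 M : pd M -> \det M != 0.
Proof.
move=> [_ M_gt0]; apply/negP => /det_eq0P [x x_neq0 Mx0].
by have := M_gt0 x x_neq0; rewrite /mxform -mulmxA Mx0 mulmx0 mxE ltxx.
Qed.

Lemma psd_pd M : psd M -> \det M != 0 -> pd M.
Proof.
move=> [M_sym M_ge0] detM; split=> // x x_neq0; rewrite lt_def M_ge0 andbT.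
apply: contra detM => /eqP x0; apply/det_eq0P; exists x => //.
exact: psd_ker.
Qed.

Lemma pd_det_gt0 M : pd M -> 0 < \det M.
Proof.
move=> pdM; rewrite ltNge; apply/negP => detM_le0.
(* the determinant along the segment from 1%:M to M changes sign, yet never vanishes *)
have := @poly_ivt R (- pencil_poly 1%:M (M - 1%:M)) 0 1 ler01.
rewrite !hornerN !horner_pencil_poly scale0r addr0 scale1r addrC subrK det1.
rewrite oppr_le0 ler01 oppr_ge0 detM_le0 => /(_ isT) [t t01].
rewrite rootN => /rootP; rewrite horner_pencil_poly -conv_pencil.
by apply/eqP; apply: pd_det_neq0 (pd_conv pd1 pdM t01).
Qed.

Lemma psd_conv_det_eq0 B C r : psd B -> psd C -> 0 < r < 1 ->
  \det ((1 - r) *: B + r *: C) = 0 -> forall t, \det ((1 - t) *: B + t *: C) = 0.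
Proof.
move=> psdB psdC /andP[r_gt0 r_lt1] /eqP /det_eq0P [x x_neq0 Mx0] t.
(* a kernel vector of an interior point of the segment is a common kernel vector *)
have /eqP : mxform ((1 - r) *: B + r *: C) x x = 0.
  by rewrite /mxform -mulmxA Mx0 mulmx0 mxE.
have := psdB.2 x; have := psdC.2 x.
rewrite mxform_conv -!/(mxform _ x x) => C_ge0 B_ge0.
rewrite paddr_eq0 ?mulr_ge0 ?subr_ge0 ?(ltW r_gt0) ?(ltW r_lt1) //.
rewrite !mulf_eq0 subr_eq0 eq_sym (gt_eqF r_gt0) (lt_eqF r_lt1) /=.
move=> /andP[/eqP/(psd_ker psdB) Bx0 /eqP/(psd_ker psdC) Cx0].
apply/eqP/det_eq0P; exists x => //.
by rewrite mulmxDl -!scalemxAl Bx0 Cx0 !scaler0 addr0.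
Qed.

End SemiDefinite.

Section ComplexPencil.
Variables (R : realType) (n : nat).
Local Notation toC := (real_complex R).
Local Notation Re := (@complex.Re R).
Local Notation Im := (@complex.Im R).

Lemma hermitian_form_sym (S : 'M[R]_n) (u : 'cV[R[i]]_n) : S^T = S ->
  ((map_mx conjc u)^T *m map_mx toC S *m u) 0 0
  = (mxform S (map_mx Re u) (map_mx Re u) + mxform S (map_mx Im u) (map_mx Im u))%:C%C.
Proof.
move=> S_sym; pose x k := Re (u k 0); pose y k := Im (u k 0).
have term j k : (u k 0)^*%C * toC (S k j) * u j 0
    = toC (S k j * (x k * x j + y k * y j))
      + 'i%C * toC (S k j * (x k * y j - y k * x j)).
  rewrite /x /y; case: (u k 0) => a b; case: (u j 0) => c e.
  by apply/eqP; rewrite eq_complex /=; apply/andP; split; apply/eqP; ring.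
have S_symE k j : S k j = S j k by rewrite -{1}S_sym mxE.
have skew : \sum_j \sum_k S k j * (x k * y j - y k * x j) = 0.
  rewrite (eq_bigr (fun j => \sum_k S k j * (x k * y j) - \sum_k S k j * (y k * x j))).
    rewrite sumrB exchange_big /=; apply/eqP; rewrite subr_eq0; apply/eqP.
    by apply: eq_bigr => j _; apply: eq_bigr => k _; rewrite S_symE; ring.
  by move=> j _; rewrite -sumrB; apply: eq_bigr => k _; ring.
transitivity (\sum_j \sum_k (u k 0)^*%C * toC (S k j) * u j 0).
  rewrite mxE; apply: eq_bigr => j _; rewrite mxE mulr_suml.
  by apply: eq_bigr => k _; rewrite !mxE.
under eq_bigr => j _ do under eq_bigr => k _ do rewrite term.
under eq_bigr => j _ do rewrite big_split -mulr_sumr -!rmorph_sum.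
rewrite big_split -mulr_sumr -!rmorph_sum /= skew rmorph0 mulr0 addr0.
congr toC; rewrite /mxform !mxE -big_split; apply: eq_bigr => j _.
rewrite !mxE !mulr_suml -big_split; apply: eq_bigr => k _.
by rewrite !mxE /x /y /=; ring.
Qed.

Lemma det_pencil_nonreal_neq0 (A D : 'M[R]_n) (w : R[i]) :
  pd A -> D^T = D -> Im w != 0 -> \det (map_mx toC A + w *: map_mx toC D) != 0.
Proof.
move=> [A_sym A_gt0] D_sym Imw_neq0; apply/negP => /det_eq0P [u u_neq0 Mu0].
set x := map_mx Re u; set y := map_mx Im u.
set a := mxform A x x + mxform A y y; set d := mxform D x x + mxform D y y.
have : a%:C%C + w * d%:C%C = 0.
  rewrite -(hermitian_form_sym u A_sym) -(hermitian_form_sym u D_sym).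
  have := congr1 (fun M => ((map_mx conjc u)^T *m M) 0 0) Mu0.
  rewrite /= mulmx0 mulmxA mulmxDr -scalemxAr mulmxDl -scalemxAl.
  by rewrite [X in _ = X -> _]mxE => <-; rewrite [RHS]mxE [X in _ = _ + X]mxE.
clear Mu0; case: w Imw_neq0 => wr wi /= wi_neq0 /eqP; rewrite eq_complex /=.
move=> /andP[/eqP Re_eq0 /eqP Im_eq0].
have d0 : d = 0.
  move: Im_eq0; rewrite mulr0 !add0r => /eqP.
  by rewrite mulf_eq0 (negPf wi_neq0) => /eqP.
have a0 : a = 0 by move: Re_eq0; rewrite d0 !mulr0 subr0 addr0.
have A_ge0 z : 0 <= mxform A z z.
  have [->|z_neq0] := eqVneq z 0; last exact: ltW (A_gt0 z z_neq0).
  by rewrite /mxform mulmx0 mxE.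
have [x0 y0] : x = 0 /\ y = 0.
  split; apply/eqP/negP => /negP/A_gt0.
    by have := A_ge0 y; move: a0; rewrite /a; lra.
  by have := A_ge0 x; move: a0; rewrite /a; lra.
apply: (negP u_neq0); apply/eqP/matrixP => k j; rewrite (ord1 j) mxE.
have := congr1 (fun M : 'cV[R]_n => M k 0) x0.
have := congr1 (fun M : 'cV[R]_n => M k 0) y0.
rewrite !mxE; by case: (u k 0) => ? ? /= -> ->.
Qed.

End ComplexPencil.

Section Sufficiency.
Variables (R : realType) (n : nat).
Local Notation toC := (real_complex R).

Lemma pencil_poly_real_rooted (B D : 'M[R]_n) t0 : pd (B + t0 *: D) -> D^T = D ->
  forall z, root (map_poly toC (pencil_poly B D)) z -> complex.Im z = 0.
Proof.
move=> pdA D_sym z; apply: contraTeq => Imz_neq0.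
rewrite /root pencil_poly_map horner_pencil_poly.
have -> : map_mx toC B + z *: map_mx toC D
          = map_mx toC (B + t0 *: D) + (z - toC t0) *: map_mx toC D.
  by apply/matrixP => i j; rewrite !mxE rmorphD rmorphM /=; ring.
by apply: det_pencil_nonreal_neq0 => //; case: z Imz_neq0 => x y; rewrite /= subr0.
Qed.

Lemma Lambda_concave_F_alpha (a : R) : 0 < a -> (n.-1)%:R * a <= 1 ->
  Lambda_concave (@F_alpha R n a).
Proof.
move=> a_gt0 na B C psdB psdC detCB.
set P := pencil_poly B (C - B).
have P_conv t : \det ((1 - t) *: B + t *: C) = P.[t].
  by rewrite horner_pencil_poly conv_pencil.
suff concP : concave_on01 (fun t => P.[t] `^ a).
  by move=> s t l s01 t01 l01; rewrite /F_alpha !P_conv; apply: concP.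
have [[t0 t0_01 Pt0_neq0] | P0] := pselect (exists2 t0, 0 <= t0 <= 1 & P.[t0] != 0);
  last first.
  have {}P0 t : 0 <= t <= 1 -> P.[t] = 0.
    by move=> t01; apply: contra_notP P0 => /eqP Pt_neq0; exists t.
  move=> s t l s01 t01 l01 /=.
  by rewrite !P0 ?conv_in01 // powR0 ?gt_eqF // !mulr0 addr0.
have pdA : pd ((1 - t0) *: B + t0 *: C).
  by apply: psd_pd; [exact: psd_conv | rewrite P_conv].
have [rs PE size_rs] : exists2 rs : seq R, P = lead_coef P *: \prod_(r <- rs) ('X - r%:P)
                                         & (size rs).+1 = size P.
  apply: real_rooted_split; apply: (@pencil_poly_real_rooted _ _ t0).
    by rewrite -conv_pencil.
  by rewrite linearB /= psdB.1 psdC.1.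
apply: (concave_on01_powR_split PE _ t0_01 _ a_gt0).
- move=> t t01; rewrite -P_conv; apply/eqP => /(psd_conv_det_eq0 psdB psdC t01).
  by move=> /(_ t0); rewrite P_conv; apply/eqP.
- by rewrite -P_conv; apply: pd_det_gt0.
apply: le_trans na; rewrite ler_pM2r // ler_nat -ltnS.
have := size_pencil_poly_singular B detCB; rewrite -/P -size_rs => rs_lt_n.
by rewrite prednK // (leq_trans _ rs_lt_n).
Qed.
End Sufficiency.

Section Necessity.
Variable R : realType.

Lemma psd_diag n (r : 'rV[R]_n) : (forall j, 0 <= r 0 j) -> psd (diag_mx r).
Proof.
move=> r_ge0; split=> [|v]; first exact: tr_diag_mx.
rewrite mul_mx_diag mxE sumr_ge0 // => i _; rewrite !mxE mulrAC -expr2.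
by rewrite mulr_ge0 ?sqr_ge0.
Qed.

Lemma psd1 n : psd (1%:M : 'M[R]_n).
Proof. by rewrite -diag_const_mx; apply: psd_diag => j; rewrite mxE. Qed.

Lemma Lambda_concave_F_alpha_le k (a : R) : 0 < a ->
  Lambda_concave (@F_alpha R k.+2 a) -> k.+1%:R * a <= 1.
Proof.
move=> a_gt0 concF.
pose B : 'M[R]_k.+2 := diag_mx (\row_j (j == 0)%:R).
have psdB : psd B by apply: psd_diag => j; rewrite mxE ler0n.
have det_conv t : \det ((1 - t) *: B + t *: 1%:M) = t ^+ k.+1.
  have -> : (1 - t) *: B + t *: 1%:M = diag_mx (\row_j (if j == 0 then 1 else t)).
    apply/matrixP => i j; rewrite !mxE.
    by case: (i == j); case: (i == 0); rewrite ?mulr1n ?mulr0n; ring.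
  rewrite det_diag big_ord_recl !mxE eqxx mul1r.
  by rewrite (eq_bigr (fun=> t)) ?prodr_const ?card_ord // => i _; rewrite !mxE.
have detCB : \det (1%:M - B) = 0.
  rewrite -diag_const_mx -linearB /= det_diag big_ord_recl !mxE eqxx.
  by rewrite subrr mul0r.
have [half_gt0 half_lt1] : 0 < (2^-1 : R) /\ (2^-1 : R) < 1.
  by rewrite invr_gt0 invf_lt1 ?ltr0n ?ltr1n.
have s01 : 0 <= (0 : R) <= 1 by rewrite lexx ler01.
have t01 : 0 <= (1 : R) <= 1 by rewrite lexx ler01.
have l01 : 0 <= (2^-1 : R) <= 1 by rewrite !ltW.
have := concF B 1%:M psdB (psd1 k.+2) detCB 0 1 2^-1 s01 t01 l01.
rewrite /F_alpha !det_conv mulr0 add0r mulr1 expr0n powR0 ?gt_eqF //.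
rewrite expr1n powR1 mulr0 mulr1 add0r -powR_mulrn ?invr_ge0 ?ler0n // -powRrM.
rewrite -(@ler_ln _ 2^-1) ?posrE ?powR_gt0 // ln_powR.
by rewrite -{1}[ln _]mul1r ler_nM2r // ln_lt0 ?half_gt0.
Qed.
End Necessity.

Theorem proposition1p2 (R : realType) (d : nat) (alpha : R) :
  (2 <= d)%N -> 0 < alpha ->
  (Lambda_concave (@F_alpha R d alpha) <-> alpha <= (d.-1)%:R^-1).
Proof.
case: d => [|[|k]] // _ alpha_gt0.
rewrite -[X in _ <= X]mulr1 ler_pdivlMl ?ltr0n //.
split; first exact: Lambda_concave_F_alpha_le.
exact: Lambda_concave_F_alpha.
Qed.
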